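(* Let $\overline{G}$ be the roommate diversity game described in the context. If an outcome $\pi$ of $\overline{G}$ satisfies $|D_\pi^n|=1$ and $|D_\pi^-|=1$, then $\pi$ is a top-type outcome.
   Context: In a roommate diversity game with agent set $N=R\cup B$ ($R$ red, $B$ blue) and room size $s$, an outcome is a partition of $N$ into rooms of size $s$; $\pi(a)$ is the room containing $a$ and $\theta(C)=|C\cap R|/|C|$. Each agent $a$ has a trichotomous preference given by a partition of the fractions into sets $D_a^+$ (approved), $D_a^n$ (neutral), $D_a^-$ (disapproved), possibly empty, with approved $\succ$ neutral $\succ$ disapproved and indifference within each set. For an outcome $\pi$, $D_\pi^+=\{a:\theta(\pi(a))\in D_a^+\}$, and $D_\pi^n$, $D_\pi^-$ are defined analogously. The game $\overline{G}$: $R=\{r_1,r_2,r_3\}$, $B=\{b_1,\dots,b_6\}$, $s=3$; $r_1$: $D^+=\{1/3\}$, $D^-=\{2/3,1\}$; $r_2,r_3$: $D^+=\{2/3\}$, $D^-=\{1/3,1\}$; $b_1,\dots,b_4$: $D^+=\{1/3\}$, $D^n=\{2/3\}$, $D^-=\{0\}$; $b_5,b_6$: $D^+=\{0\}$, $D^-=\{1/3,2/3\}$ (a red agent is never in a room of fraction $0$, a blue agent never in one of fraction $1$). An outcome is top-type if it equals $\{\{r_1,\hat b_1,\hat b_2\},\{r_2,r_3,\hat b_3\},\{b_5,b_6,\hat b_4\}\}$ for some enumeration $\hat b_1,\hat b_2,\hat b_3,\hat b_4$ of $\{b_1,b_2,b_3,b_4\}$. *)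

From mathcomp Require Import all_boot all_order all_algebra all_fingroup.
Set Implicit Arguments. Unset Strict Implicit. Unset Printing Implicit Defensive.
Import Order.TTheory GRing.Theory Num.Theory.

(* Agents of the game Gbar: 'I_9.  Indices 0,1,2 are r1,r2,r3;
   indices 3..8 are b1..b6. *)
Definition agent := 'I_9.
Definition r1 : agent := inord 0.
Definition r2 : agent := inord 1.
Definition r3 : agent := inord 2.
Definition b (j : nat) : agent := inord (j + 2).

Definition Red : {set agent} := [set r1; r2; r3].
Definition Blue : {set agent} := ~: Red.

Definition s : nat := 3.

Definition outcome (P : {set {set agent}}) : Prop :=
  partition P [set: agent] /\ forall C, C \in P -> #|C| = s.

Definition theta (C : {set agent}) : rat :=
  ((#|C :&: Red|)%:R / (#|C|)%:R)%R.

(* trichotomous preferences: approved / neutral / disapproved fractions *)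
Definition Dplus (a : agent) : seq rat :=
  if a == r1 then [:: (1/3)%R]
  else if (a == r2) || (a == r3) then [:: (2/3)%R]
  else if a \in [set b 1; b 2; b 3; b 4] then [:: (1/3)%R]
  else [:: 0%R].
Definition Dneut (a : agent) : seq rat :=
  if a \in [set b 1; b 2; b 3; b 4] then [:: (2/3)%R] else [::].
Definition Dminus (a : agent) : seq rat :=
  if a == r1 then [:: (2/3)%R; 1%R]
  else if (a == r2) || (a == r3) then [:: (1/3)%R; 1%R]
  else if a \in [set b 1; b 2; b 3; b 4] then [:: 0%R]
  else [:: (1/3)%R; (2/3)%R].

Definition room (P : {set {set agent}}) (a : agent) := pblock P a.

Definition Dpi_plus (P : {set {set agent}}) : {set agent} :=
  [set a | theta (room P a) \in Dplus a].
Definition Dpi_n (P : {set {set agent}}) : {set agent} :=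
  [set a | theta (room P a) \in Dneut a].
Definition Dpi_minus (P : {set {set agent}}) : {set agent} :=
  [set a | theta (room P a) \in Dminus a].

(* top-type outcomes: {{r1,^b1,^b2},{r2,r3,^b3},{b5,b6,^b4}} for some
   enumeration ^b1..^b4 of {b1..b4}; the enumeration is b (1 + sg i) for
   a permutation sg of 'I_4. *)
Definition top_type (P : {set {set agent}}) : Prop :=
  exists sg : {perm 'I_4},
    let bh (i : nat) := b (1 + sg (inord i)) in
    P = [set [set r1; bh 0; bh 1]; [set r2; r3; bh 2]; [set b 5; b 6; bh 3]].

From mathcomp Require Import all_boot all_order all_algebra all_fingroup.
From mathcomp Require Import zify.

Set Implicit Arguments.
Unset Strict Implicit.
Unset Printing Implicit Defensive.

(* Every preference is decided by the number of red agents
   in the room.  If r2 and r3 are separated, two red agents disapprove, and if all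
   three reds share a room, r2 and r3 both do; so two rooms are {r2, r3, x} and
   {r1, y, z}, and the third room Z is all blue.  Each of b1..b4 in Z disapproves,
   so at most one member of Z is among b1..b4, i.e. Z contains b5 and b6. *)

Section Set3.
Variable T : finType.
Implicit Types (A : {set T}) (x y z : T).

Lemma card_setI_set3 A x y z : uniq [:: x; y; z] ->
  #|A :&: [set x; y; z]| = (x \in A) + (y \in A) + (z \in A).
Proof.
move=> Uxyz; transitivity (count (mem A) [:: x; y; z]); last by rewrite /= addn0 addnA.
rewrite -size_filter -(card_uniqP (filter_uniq _ Uxyz)).
by apply: eq_card => t; rewrite !inE mem_filter !inE -orbA.
Qed.

Lemma set3_eq A x y z : #|A| <= 3 -> uniq [:: x; y; z] ->
  x \in A -> y \in A -> z \in A -> A = [set x; y; z].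
Proof.
move=> A3 Uxyz Ax Ay Az; apply/eqP; rewrite eq_sym eqEcard.
have -> : #|[set x; y; z]| = 3.
  transitivity #|[:: x; y; z]|; last exact/card_uniqP.
  by apply: eq_card => t; rewrite !inE -orbA.
by rewrite A3 andbT; apply/subsetP => t; rewrite !inE -orbA => /or3P [] /eqP ->.
Qed.

Lemma set3_of_card A x y : #|A| = 3 -> x \in A -> y \in A -> x != y ->
  exists z, [/\ z != x, z != y & A = [set x; y; z]].
Proof.
move=> A3 Ax Ay nxy.
have : 0 < #|A :\: [set x; y]|.
  rewrite cardsD A3 (setIidPr _) ?cards2 ?nxy //.
  by apply/subsetP => t; rewrite !inE => /orP [] /eqP ->.
case/card_gt0P => z; rewrite !inE negb_or => /andP [/andP [nzx nzy] Az].
exists z; split => //; apply: set3_eq; rewrite ?A3 //.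
by rewrite /= !inE !negb_or nxy eq_sym nzx eq_sym nzy.
Qed.

End Set3.

Lemma perm2_exists (T : finType) (a b u v : T) : a != b -> u != v ->
  exists s : {perm T}, s a = u /\ s b = v.
Proof.
move=> nab nuv; pose s1 := tperm a u.
have s1b_u : s1 b != u by rewrite -[u](tpermL a u) (inj_eq perm_inj) eq_sym.
exists (s1 * tperm (s1 b) v)%g; rewrite !permM tpermL; split => //.
by rewrite /s1 tpermL tpermD // eq_sym.
Qed.

Definition blue4 (i : 'I_4) : agent := b (1 + i).
Arguments blue4 : simpl never.

Lemma agent_eqE (x y : agent) : (x == y) = (x == y :> nat).
Proof. by []. Qed.

Lemma val_r1 : r1 = 0 :> nat. Proof. by rewrite /r1 inordK. Qed.
Lemma val_r2 : r2 = 1 :> nat. Proof. by rewrite /r2 inordK. Qed.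
Lemma val_r3 : r3 = 2 :> nat. Proof. by rewrite /r3 inordK. Qed.
Lemma val_b j : j <= 6 -> b j = j + 2 :> nat.
Proof. by move=> j6; rewrite /b inordK //; lia. Qed.
Lemma val_blue4 i : blue4 i = i + 3 :> nat.
Proof. by rewrite val_b; have := ltn_ord i; lia. Qed.

Lemma blue4_inj : injective blue4.
Proof. by move=> i k /(congr1 (@nat_of_ord 9)); rewrite !val_blue4 => /addIn /val_inj. Qed.

Lemma inRed a : (a \in Red) = (a < 3).
Proof.
rewrite !inE !agent_eqE val_r1 val_r2 val_r3.
by case: (nat_of_ord a) => [|[|[|n]]].
Qed.

Lemma red_neq : [/\ r1 != r2, r1 != r3 & r2 != r3].
Proof. by rewrite !agent_eqE val_r1 val_r2 val_r3. Qed.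

Lemma red_in : [/\ r1 \in Red, r2 \in Red & r3 \in Red].
Proof. by rewrite !inE !eqxx !orbT. Qed.

Lemma uniq_Red : uniq [:: r1; r2; r3].
Proof. by case: red_neq; rewrite /= !inE !negb_or => -> -> ->. Qed.

Lemma blue4_notin_Red i : blue4 i \notin Red.
Proof. by rewrite inRed val_blue4 -leqNgt leq_addl. Qed.

Lemma red_neq_blue4 x m : x \in Red -> x != blue4 m.
Proof. by move=> xR; apply: contraTneq xR => ->; apply: blue4_notin_Red. Qed.

Lemma b56_notin_Red : b 5 \notin Red /\ b 6 \notin Red.
Proof. by rewrite !inRed !val_b. Qed.

Lemma b5_neq_b6 : b 5 != b 6.
Proof. by rewrite agent_eqE !val_b. Qed.

Lemma blue4_notin_b56 i : blue4 i \notin [set b 5; b 6].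
Proof.
rewrite !inE !agent_eqE val_blue4 !val_b //.
by have := ltn_ord i; lia.
Qed.

Lemma notin_Red_blues k x : x \in [set b 5; b 6; blue4 k] -> x \notin Red.
Proof.
case: b56_notin_Red => b5B b6B.
by case/setUP => [/set2P [] | /set1P] -> //; apply: blue4_notin_Red.
Qed.

Lemma blue4_in_set3 m k x y :
  blue4 m \notin [set x; y] -> (blue4 m \in [set x; y; blue4 k]) = (m == k).
Proof. by move=> /negbTE xy; rewrite in_setU xy inE (inj_eq blue4_inj). Qed.

Lemma blueP a : a \notin Red -> a \notin [set b 5; b 6] -> exists i, a = blue4 i.
Proof.
rewrite inRed !inE !agent_eqE !val_b // -leqNgt => a3 a78.
have ai : a - 3 < 4 by move: a78; have := ltn_ord a; lia.
by exists (Ordinal ai); apply: val_inj => /=; rewrite val_blue4 /=; lia.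
Qed.

Lemma Dminus_r1 : Dminus r1 = [:: 2/3; 1]%R.
Proof. by rewrite /Dminus eqxx. Qed.

Lemma Dminus_red a : a \in Red -> a != r1 -> Dminus a = [:: 1/3; 1]%R.
Proof. by move=> + /negbTE n1; rewrite /Dminus n1 !inE n1 => ->. Qed.

Lemma Dminus_blue4 i : Dminus (blue4 i) = [:: 0]%R.
Proof.
have := blue4_notin_Red i; rewrite /Dminus !inE !negb_or.
move=> /andP [/andP [/negbTE-> /negbTE->] /negbTE->].
rewrite !agent_eqE val_blue4 !val_b //.
by case: i => -[|[|[|[|]]]].
Qed.

Section Outcome.
Variable P : {set {set agent}}.
Hypothesis outP : outcome P.

Lemma mem_cover_outcome a : a \in cover P.
Proof. by case: outP => /and3P [/eqP -> _ _] _; rewrite inE. Qed.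

Lemma room_in a : room P a \in P.
Proof. exact/pblock_mem/mem_cover_outcome. Qed.

Lemma mem_room a : a \in room P a.
Proof. by rewrite mem_pblock mem_cover_outcome. Qed.

Lemma card_room a : #|room P a| = 3.
Proof. exact: outP.2 (room_in a). Qed.

Lemma same_room a x : x \in room P a -> room P x = room P a.
Proof. by case: outP => /and3P [_ triv _] _; apply: same_pblock. Qed.

Lemma mem_roomC a x : (x \in room P a) = (a \in room P x).
Proof. by apply/idP/idP => /same_room ->; apply: mem_room. Qed.

Lemma card_rooms : #|P| = 3.
Proof.
have := card_uniform_partition outP.2 outP.1.
by rewrite cardsT card_ord /s; lia.
Qed.

Definition reds a := #|room P a :&: Red|.

Lemma reds_sum a : reds a = (r1 \in room P a) + (r2 \in room P a) + (r3 \in room P a).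
Proof. exact: card_setI_set3 uniq_Red. Qed.

Lemma same_reds a x : x \in room P a -> reds x = reds a.
Proof. by rewrite /reds => /same_room ->. Qed.

Lemma reds_gt0 a : a \in Red -> 0 < reds a.
Proof. by move=> aR; apply/card_gt0P; exists a; rewrite inE mem_room. Qed.

Lemma reds_le3 a : reds a <= 3.
Proof. by rewrite -(card_room a) subset_leq_card ?subsetIl. Qed.

Lemma in_Dpi_minus a : (a \in Dpi_minus P) = ((reds a)%:R / 3%:R \in Dminus a)%R.
Proof. by rewrite inE /theta card_room. Qed.

Lemma r1_disapproves : 2 <= reds r1 -> r1 \in Dpi_minus P.
Proof.
rewrite in_Dpi_minus Dminus_r1; move: (reds_le3 r1).
by case: (reds r1) => [|[|[|[|n]]]] //= _ _; vm_compute.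
Qed.

Lemma red_disapproves a : a \in Red -> a != r1 -> reds a != 2 -> a \in Dpi_minus P.
Proof.
move=> aR n1; rewrite in_Dpi_minus Dminus_red //; move: (reds_gt0 aR) (reds_le3 a).
by case: (reds a) => [|[|[|[|n]]]] //= _ _ _; vm_compute.
Qed.

Lemma blue4_disapproves i : reds (blue4 i) = 0 -> blue4 i \in Dpi_minus P.
Proof. by rewrite in_Dpi_minus Dminus_blue4 => ->; vm_compute. Qed.

Lemma room_neq a x : x \notin room P a -> room P x != room P a.
Proof. by apply: contraNneq => <-; apply: mem_room. Qed.

Lemma top_type_of_rooms i j : i != j ->
    room P r2 = [set r2; r3; blue4 i] -> room P (b 5) = [set b 5; b 6; blue4 j] ->
  top_type P.
Proof.
move=> nij Er2 Eb5; have [n12 n13 _] := red_neq; have [R1 R2 R3] := red_in.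
have r1_out2 : r1 \notin room P r2.
  by rewrite Er2 !inE (negbTE n12) (negbTE n13) /= red_neq_blue4.
have r1_out5 : r1 \notin room P (b 5) by rewrite Eb5; apply: contraL R1; apply: notin_Red_blues.
have r2_out5 : r2 \notin room P (b 5) by rewrite Eb5; apply: contraL R2; apply: notin_Red_blues.
have EP : P = [set room P r1; room P r2; room P (b 5)].
  apply: set3_eq; rewrite ?card_rooms ?room_in //=.
  by rewrite !in_cons in_nil !orbF !negb_or !room_neq.
have in_rooms a : [|| a \in room P r1, a \in room P r2 | a \in room P (b 5)].
  have : room P a \in [set room P r1; room P r2; room P (b 5)] by rewrite -EP room_in.
  by rewrite !inE => /orP [/orP [] | ] /eqP <-; rewrite mem_room ?orbT.
have n23 : (inord 2 : 'I_4) != inord 3 by rewrite -(inj_eq val_inj) /= !inordK.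
have [sg [sg2 sg3]] := perm2_exists n23 nij.
have sg_neq k l : k < 4 -> l < 4 -> k != l -> sg (inord k) != sg (inord l).
  by move=> k4 l4; rewrite (inj_eq perm_inj) -(inj_eq val_inj) /= !inordK.
have in_r1 m : m != i -> m != j -> blue4 m \in room P r1.
  move=> /negbTE nmi /negbTE nmj; have := in_rooms (blue4 m).
  rewrite Er2 Eb5 !blue4_in_set3 ?nmi ?nmj ?orbF ?blue4_notin_b56 //.
  by apply: contra (blue4_notin_Red m) => /set2P [] ->.
have [n0i n0j] : sg (inord 0) != i /\ sg (inord 0) != j by rewrite -sg2 -sg3 !sg_neq.
have [n1i n1j] : sg (inord 1) != i /\ sg (inord 1) != j by rewrite -sg2 -sg3 !sg_neq.
exists sg; rewrite /= sg2 sg3 -Er2 -Eb5 {1}EP; congr [set _; _; _].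
apply: set3_eq; rewrite ?card_room ?mem_room ?in_r1 //= !inE !negb_or.
by rewrite (inj_eq blue4_inj) sg_neq // !red_neq_blue4.
Qed.

Hypothesis one_disapprover : #|Dpi_minus P| <= 1.

Lemma disapprover_unique x y : x \in Dpi_minus P -> y \in Dpi_minus P -> x = y.
Proof. by move=> Dx Dy; apply: (card_le1_eqP one_disapprover). Qed.

Lemma r3_in_room_r2 : r3 \in room P r2.
Proof.
have [n12 n13 n23] := red_neq; apply/negPn/negP => r3_out.
have D1 : (r1 \in room P r2) || (r1 \in room P r3) -> r1 \in Dpi_minus P.
  move=> r1_in; apply: r1_disapproves; rewrite reds_sum mem_room !(mem_roomC r1).
  by move: r1_in; case: (r1 \in room P r2); case: (r1 \in room P r3).
have D2 : r1 \notin room P r2 -> r2 \in Dpi_minus P.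
  move=> r1_out; apply: red_disapproves; rewrite 1?eq_sym ?inE ?eqxx ?orbT //.
  by rewrite reds_sum mem_room (negbTE r1_out) (negbTE r3_out).
have D3 : r1 \notin room P r3 -> r3 \in Dpi_minus P.
  move=> r1_out; apply: red_disapproves; rewrite 1?eq_sym ?inE ?eqxx ?orbT //.
  by rewrite reds_sum mem_room (negbTE r1_out) mem_roomC (negbTE r3_out).
have [r12 | r12] := boolP (r1 \in room P r2).
  have r13 : r1 \notin room P r3.
    by apply: contra r3_out => r13; rewrite -(same_room r12) (same_room r13) mem_room.
  by move/eqP: n13; apply; apply: disapprover_unique (D1 _) (D3 r13); rewrite r12.
have [r13 | r13] := boolP (r1 \in room P r3).
  by move/eqP: n12; apply; apply: disapprover_unique (D1 _) (D2 r12); rewrite r13 orbT.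
by move/eqP: n23; apply; apply: disapprover_unique (D2 r12) (D3 r13).
Qed.

Lemma r1_notin_room_r2 : r1 \notin room P r2.
Proof.
have [n12 n13 n23] := red_neq; apply/negP => r12.
have reds2 : reds r2 = 3 by rewrite reds_sum mem_room r12 r3_in_room_r2.
move/eqP: n23; apply; apply: disapprover_unique; apply: red_disapproves;
  rewrite 1?eq_sym ?inE ?eqxx ?orbT ?(same_reds r3_in_room_r2) ?reds2 //.
Qed.

Definition redless := [set a | reds a == 0].

Lemma reds_eq0 a : (reds a == 0) = (a \notin room P r1) && (a \notin room P r2).
Proof.
rewrite reds_sum !(mem_roomC a) (same_room r3_in_room_r2).
by case: (a \in room P r1); case: (a \in room P r2).
Qed.

Lemma card_redless : #|redless| = 3.
Proof.
have -> : redless = ~: (room P r1 :|: room P r2).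
  by apply/setP => a; rewrite !inE reds_eq0 negb_or.
have disj : room P r1 :&: room P r2 = set0.
  apply/setP => a; rewrite !inE; apply/negP => /andP [/same_room e1 /same_room e2].
  by move: r1_notin_room_r2; rewrite -e2 e1 mem_room.
by rewrite cardsCs setCK cardsU disj cards0 !card_room card_ord.
Qed.

Lemma b56_sub_redless : [set b 5; b 6] \subset redless.
Proof.
set B56 := [set b 5; b 6].
have le1 : #|redless :\: B56| <= 1.
  apply: leq_trans one_disapprover; apply/subset_leq_card/subsetP => a.
  rewrite in_setD [_ \in redless]inE => /andP [a56 /eqP a0].
  have aB : a \notin Red by apply/negP => /reds_gt0; rewrite a0.
  by have [i ai] := blueP aB a56; rewrite ai in a0 *; apply: blue4_disapproves.
have := cardsID B56 redless; rewrite card_redless => cardZ.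
apply/setIidPr/eqP; rewrite eqEcard subsetIr cards2 b5_neq_b6 /=.
by move: le1 cardZ; set k := #|_ :\: _|; set l := #|_ :&: _|; lia.
Qed.

Lemma room_b5_redless : room P (b 5) = redless.
Proof.
have /subsetP B56 := b56_sub_redless.
apply/eqP; rewrite eqEcard card_room card_redless leqnn andbT.
apply/subsetP => a /same_reds; rewrite inE => ->.
by move: (B56 (b 5)); rewrite !inE eqxx => /(_ isT).
Qed.

Lemma rooms_r2_b5 : exists i j, [/\ i != j, room P r2 = [set r2; r3; blue4 i]
  & room P (b 5) = [set b 5; b 6; blue4 j]].
Proof.
have [_ _ n23] := red_neq.
have /subsetP B56 := b56_sub_redless.
have b6_in : b 6 \in room P (b 5) by rewrite room_b5_redless B56 // !inE eqxx orbT.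
have b56_in x : x \in room P r2 -> x \notin [set b 5; b 6].
  move=> x_in; apply/negP => /B56; rewrite inE (same_reds x_in) eqn0Ngt.
  by case: red_in => _ /reds_gt0 ->.
have [x [nx2 nx3 Er2]] := set3_of_card (card_room r2) (mem_room r2) r3_in_room_r2 n23.
have [w [nw5 nw6 Eb5]] := set3_of_card (card_room (b 5)) (mem_room _) b6_in b5_neq_b6.
have x_in : x \in room P r2 by rewrite Er2 !inE eqxx !orbT.
have w_in : w \in room P (b 5) by rewrite Eb5 !inE eqxx !orbT.
have [i xi] : exists i, x = blue4 i.
  apply: blueP (b56_in x x_in); rewrite !inE (negbTE nx2) (negbTE nx3) !orbF.
  by apply: contraNneq r1_notin_room_r2 => <-.
have [j wj] : exists j, w = blue4 j.
  apply: blueP; last by rewrite !inE negb_or nw5 nw6.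
  by apply/negP => /reds_gt0; move: w_in; rewrite room_b5_redless inE => /eqP ->.
exists i, j; split; rewrite -?xi -?wj //.
apply: contraTneq (_ : b 5 \in [set b 5; b 6]) => [eij|]; last by rewrite !inE eqxx.
by apply: b56_in; rewrite -(same_room x_in) xi eij -wj (same_room w_in) mem_room.
Qed.

End Outcome.

Theorem mainTheorem7 (P : {set {set agent}}) :
  outcome P -> #|Dpi_n P| = 1 -> #|Dpi_minus P| = 1 -> top_type P.
Proof.
move=> outP _ one_disapprover.
have [i [j [nij Er2 Eb5]]] := rooms_r2_b5 outP (eq_leq one_disapprover).
exact: (top_type_of_rooms outP nij Er2 Eb5).
Qed.
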